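(* Let $G$ be a group with finite generating set $Y$ and let $\mathscr S$ be a retractive family of subsets of $Y$. Then the kernel of $\rho_{\mathscr S}=\prod_{S\in\mathscr S}\rho_S\colon G\to\prod_{S\in\mathscr S}G_S$ is generated by monic commutators whose support is transverse to $\mathscr S$.
   Context: Conventions: $[x,y]=x^{-1}y^{-1}xy$. For $S\subseteq Y$, $G_S$ is the quotient of $G$ by the normal closure of $Y-S$, and $\rho_S\colon G\to G_S$ is the projection. $S$ is retractive if $\rho_S$ restricts to an injection on the subgroup $\langle S\rangle$ ($\emptyset$ is retractive by convention). A retractive family is a family of retractive subsets of $Y$ all of whose intersections are also retractive. The support of $q\in G$ relative to $\mathscr S$ is $\bigcap\{S\in\mathscr S: q\in\langle S\rangle\}$. Monic commutators: for $x\in Y$, $x$ and $x^{-1}$ are monic commutators; if $x,y$ are monic commutators then so is $[x,y]$. A subset $T\subseteq Y$ is transverse to $\mathscr S$ if $T\not\subseteq S$ for every $S\in\mathscr S$. *)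

From mathcomp Require Import all_boot.
Set Implicit Arguments. Unset Strict Implicit. Unset Printing Implicit Defensive.

Record group := Group {
  gcar :> Type;
  gmul : gcar -> gcar -> gcar;
  gone : gcar;
  ginv : gcar -> gcar;
  gmulA : forall x y z, gmul x (gmul y z) = gmul (gmul x y) z;
  gmul1 : forall x, gmul gone x = x;
  gmulV : forall x, gmul (ginv x) x = gone
}.

Section Defs.
Variable G : group.
Local Notation "x * y" := (gmul x y).
Local Notation "x ^-1" := (ginv x).

Definition gcomm (x y : G) : G := x^-1 * (y^-1 * (x * y)).

Inductive gen (A : G -> Prop) : G -> Prop :=
| gen_in x : A x -> gen A x
| gen_one : gen A (gone G)
| gen_mul x y : gen A x -> gen A y -> gen A (x * y)
| gen_inv x : gen A x -> gen A (x^-1).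

Definition ncl (A : G -> Prop) : G -> Prop :=
  gen (fun x => exists a g, A a /\ x = g^-1 * (a * g)).

(* Generators: Y is the image of an injective map y from a finite index type I;
   subsets of Y are encoded as {set I}. *)
Variables (I : finType) (y : I -> G).

Definition span (S : {set I}) : G -> Prop := gen (fun g => exists2 i, i \in S & g = y i).

(* kernel of rho_S : G -> G_S, i.e. normal closure of Y - S *)
Definition Nker (S : {set I}) : G -> Prop := ncl (fun g => exists2 i, i \notin S & g = y i).

(* rho_S a = rho_S b in G_S = G / Nker S *)
Definition rho_eq (S : {set I}) (a b : G) : Prop := Nker S (a^-1 * b).

Definition retractive (S : {set I}) : Prop :=
  forall a b, span S a -> span S b -> rho_eq S a b -> a = b.

(* all intersections of members of the family (including single members) retractive;
   the empty subfamily gives Y, which is trivially retractive. *)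
Definition retractive_family (F : {set {set I}}) : Prop :=
  forall F' : {set {set I}}, F' \subset F -> retractive (\bigcap_(S in F') S).

Definition rho_family_ker (F : {set {set I}}) (g : G) : Prop :=
  forall S, S \in F -> rho_eq S g (gone G).

Inductive monic_commutator : G -> Prop :=
| monic_gen i : monic_commutator (y i)
| monic_geninv i : monic_commutator ((y i)^-1)
| monic_comm a b : monic_commutator a -> monic_commutator b -> monic_commutator (gcomm a b).

Definition supp_rel (F : {set {set I}}) (q : G) (i : I) : Prop :=
  forall S, S \in F -> span S q -> i \in S.

Definition transverse (F : {set {set I}}) (T : I -> Prop) : Prop :=
  forall S, S \in F -> ~ (forall i, T i -> i \in S).

End Defs.

(* A monic commutator lies, for each S, either in <S> or in ker rho_S: the
   generators split this way and the commutator of two such elements is in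
   <S> if both are, and otherwise in the normal subgroup ker rho_S.
   Hence, S being retractive, every g in the subgroup generated by monic
   commutators in the kernels of a list L of members factors as g = k b with
   b in <S> and k generated by monic commutators in the kernels of S :: L;
   here it matters that the generated subgroup is normal, since conjugating a
   kernel element c by a monic z gives c [c, z]. If moreover g is in
   ker rho_S then so is b, so b = 1. Running this over all members of the
   family, the kernel of rho_F is generated by monic commutators lying in
   every ker rho_S. A nontrivial such q lies in no <S> (retractivity again),
   so its support is all of Y, which is transverse: a member S = Y would
   have q in <S>. *)
From Stdlib Require Import Classical.
From mathcomp Require Import all_boot.
Set Implicit Arguments. Unset Strict Implicit.

Section GroupTheory.
Variable G : group.
Local Notation "x * y" := (gmul x y).
Local Notation "x ^-1" := (ginv x).
Local Notation one := (gone G).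

Lemma mulgV (x : G) : x * x^-1 = one.
Proof.
rewrite -[x * _]gmul1 -{1}(gmulV (x^-1)) -gmulA (gmulA x^-1 x) gmulV gmul1.
by rewrite gmulV.
Qed.

Lemma mulg1 (x : G) : x * one = x.
Proof. by rewrite -(gmulV x) gmulA mulgV gmul1. Qed.

Lemma invgK (x : G) : (x^-1)^-1 = x.
Proof. by rewrite -[LHS]mulg1 -(gmulV x) gmulA gmulV gmul1. Qed.

Lemma mulKVg (x z : G) : x * (x^-1 * z) = z.
Proof. by rewrite gmulA mulgV gmul1. Qed.

Lemma mulgK (x z : G) : (x * z) * z^-1 = x.
Proof. by rewrite -gmulA mulgV mulg1. Qed.

Lemma mulgKV (x z : G) : (x * z^-1) * z = x.
Proof. by rewrite -gmulA gmulV mulg1. Qed.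

Lemma mulg_eq1 (a b : G) : a * b = one -> a = b^-1.
Proof. by move=> ab1; rewrite -(mulgK a b) ab1 gmul1. Qed.

Lemma invMg (a b : G) : (a * b)^-1 = b^-1 * a^-1.
Proof. by symmetry; apply: mulg_eq1; rewrite -gmulA (gmulA _ a) gmulV gmul1 gmulV. Qed.

Lemma invg1 : one^-1 = one.
Proof. by symmetry; apply: mulg_eq1; apply: gmul1. Qed.

Definition conjg (m h : G) : G := h^-1 * (m * h).

Lemma conjMg a b h : conjg (a * b) h = conjg a h * conjg b h.
Proof. by rewrite /conjg !gmulA mulgK. Qed.

Lemma conjVg a h : conjg (a^-1) h = (conjg a h)^-1.
Proof. by rewrite /conjg !invMg invgK gmulA. Qed.

Lemma conj1g h : conjg one h = one.
Proof. by rewrite /conjg gmul1 gmulV. Qed.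

Lemma conjgM m h1 h2 : conjg m (h1 * h2) = conjg (conjg m h1) h2.
Proof. by rewrite /conjg invMg !gmulA. Qed.

Lemma conjg1 m : conjg m one = m.
Proof. by rewrite /conjg invg1 gmul1 mulg1. Qed.

Lemma conjg_mulR c z : conjg c z = c * gcomm c z.
Proof. by rewrite /gcomm mulKVg. Qed.

Lemma gen_sub (A B : G -> Prop) x : (forall a, A a -> gen B a) -> gen A x -> gen B x.
Proof.
move=> AB; elim=> {x} [x /AB // | | x z _ hx _ hz | x _ hx].
- exact: gen_one.
- exact: gen_mul.
- exact: gen_inv.
Qed.

Lemma gen_conjg_closed (A : G -> Prop) h x :
  (forall a, A a -> gen A (conjg a h)) -> gen A x -> gen A (conjg x h).
Proof.
move=> hA; elim=> {x} [x /hA // | | x z _ hx _ hz | x _ hx].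
- by rewrite conj1g; apply: gen_one.
- by rewrite conjMg; apply: gen_mul.
- by rewrite conjVg; apply: gen_inv.
Qed.

Lemma ncl_conjg (A : G -> Prop) x h : ncl A x -> ncl A (conjg x h).
Proof.
apply: gen_conjg_closed => _ [a [g [Aa ->]]]; apply: gen_in; exists a, (g * h).
by split=> //; rewrite -[_ * (_ * _)]/(conjg a g) -conjgM.
Qed.

End GroupTheory.

Section Kernels.
Variables (G : group) (I : finType) (y : I -> G).
Hypothesis y_gen : forall g : G, gen (fun h => exists i, h = y i) g.
Local Notation "x * y" := (gmul x y).
Local Notation "x ^-1" := (ginv x).
Local Notation one := (gone G).
Local Notation monic := (monic_commutator y).

Lemma Nker_gen (i : I) (S : {set I}) : i \notin S -> Nker y S (y i).
Proof.
move=> iS; apply: gen_in; exists (y i), one; split; first by exists i.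
by rewrite invg1 gmul1 mulg1.
Qed.

Lemma span_gen (i : I) (S : {set I}) : i \in S -> span y S (y i).
Proof. by move=> iS; apply: gen_in; exists i. Qed.

Lemma monic_span_or_Nker S q : monic q -> span y S q \/ Nker y S q.
Proof.
elim=> [i | i | a b _ [Sa | Na] _ hb].
- by case: (boolP (i \in S)) => iS; [left; apply: span_gen | right; apply: Nker_gen].
- by case: (boolP (i \in S)) => iS;
    [left; apply/gen_inv/span_gen | right; apply/gen_inv/Nker_gen].
- case: hb => [Sb | Nb].
    by left; do 2 (apply: gen_mul; first exact: gen_inv); apply: gen_mul.
  right; have -> : gcomm a b = conjg (b^-1) a * b by rewrite /gcomm /conjg !gmulA.
  by apply: gen_mul => //; apply/ncl_conjg/gen_inv.
- by right; apply: gen_mul; [apply: gen_inv | apply: ncl_conjg].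
Qed.

Lemma retractive_span_Nker S b :
  retractive y S -> span y S b -> Nker y S b -> b = one.
Proof.
move=> hS Sb Nb; symmetry; apply: hS => //; first exact: gen_one.
by rewrite /rho_eq invg1 gmul1.
Qed.

Lemma rho_eq1 S g : rho_eq y S g one <-> Nker y S g.
Proof.
rewrite /rho_eq mulg1; split=> [/gen_inv | Ng]; first by rewrite invgK.
exact: gen_inv.
Qed.

Lemma span_all q : span y setT q.
Proof. by apply: gen_sub (y_gen q) => _ [i ->]; apply: span_gen; rewrite inE. Qed.

Definition monic_in_kernels (L : seq {set I}) (q : G) : Prop :=
  monic q /\ forall S, S \in L -> Nker y S q.

Lemma gen_monic_in_kernels_conjg_monic L c z :
  monic z -> monic_in_kernels L c -> gen (monic_in_kernels L) (conjg c z).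
Proof.
move=> mz [mc Nc]; rewrite conjg_mulR; apply: gen_mul; first exact: gen_in.
apply: gen_in; split; first exact: monic_comm.
move=> S LS; apply: gen_mul; [exact: gen_inv (Nc S LS) | exact: ncl_conjg (Nc S LS)].
Qed.

Lemma gen_monic_in_kernels_conjg L m h :
  gen (monic_in_kernels L) m -> gen (monic_in_kernels L) (conjg m h).
Proof.
pose closed_by h :=
  forall x, gen (monic_in_kernels L) x -> gen (monic_in_kernels L) (conjg x h).
suff: closed_by h /\ closed_by h^-1 by move=> [+ _]; apply.
move=> {m}.
elim: (y_gen h) => {h} [_ [i ->] | | h1 h2 _ [h1P h1VP] _ [h2P h2VP] | h _ [hP hVP]].
- by split=> m; apply: gen_conjg_closed => c;
    apply: gen_monic_in_kernels_conjg_monic; constructor.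
- by rewrite invg1; split=> m; rewrite conjg1.
- by rewrite invMg; split=> m Cm; rewrite conjgM; auto.
- by rewrite invgK.
Qed.

Lemma gen_monic_in_kernels_factor S L g : retractive y S ->
  gen (monic_in_kernels L) g ->
  exists2 b, span y S b & gen (monic_in_kernels (S :: L)) (g * b^-1).
Proof.
move=> hS; elim=> {g} [x [mx Nx] | | x z _ [b1 Sb1 C1] _ [b2 Sb2 C2] | x _ [b Sb Cb]].
- case: (monic_span_or_Nker S mx) => [Sx | NSx].
    by exists x => //; rewrite mulgV; apply: gen_one.
  exists one; first exact: gen_one.
  rewrite invg1 mulg1; apply: gen_in; split=> // S'.
  by rewrite inE => /orP[/eqP -> | /Nx].
- by exists one; [apply: gen_one | rewrite invg1 mulg1; apply: gen_one].
- exists (b1 * b2); first exact: gen_mul.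
  have -> : x * z * (b1 * b2)^-1 = (x * b1^-1) * conjg (z * b2^-1) (b1^-1).
    by rewrite /conjg invgK invMg !gmulA mulgKV.
  by apply: gen_mul => //; apply: gen_monic_in_kernels_conjg.
- exists (b^-1); first exact: gen_inv.
  have -> : x^-1 * b^-1^-1 = conjg ((x * b^-1)^-1) b.
    by rewrite /conjg invMg !invgK !gmulA gmulV gmul1.
  by apply/gen_monic_in_kernels_conjg/gen_inv.
Qed.

Lemma Nker_gen_monic_in_kernels L g :
  (forall S, S \in L -> retractive y S) ->
  (forall S, S \in L -> Nker y S g) -> gen (monic_in_kernels L) g.
Proof.
elim: L g => [|S L IH] g hL NLg.
  by apply: gen_sub (y_gen g) => _ [i ->]; apply: gen_in; split=> //; constructor.
have hS := hL S (mem_head _ _).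
have [b Sb Cgb] : exists2 b, span y S b & gen (monic_in_kernels (S :: L)) (g * b^-1).
  by apply: gen_monic_in_kernels_factor => //;
     apply: IH => S' LS'; [apply: hL | apply: NLg]; rewrite inE LS' orbT.
have NSgb : Nker y S (g * b^-1).
  by apply: gen_sub Cgb => a [_]; apply; apply: mem_head.
have NSb : Nker y S b.
  have -> : b = (g * b^-1)^-1 * g by rewrite invMg invgK mulgKV.
  by apply: gen_mul; [apply: gen_inv | apply: NLg; apply: mem_head].
by move: Cgb; rewrite (retractive_span_Nker hS Sb NSb) invg1 mulg1.
Qed.

Lemma retractive_family_mem (F : {set {set I}}) (S : {set I}) : retractive_family y F -> S \in F -> retractive y S.
Proof. by move=> hF FS; have := hF [set S]; rewrite big_set1; apply; rewrite sub1set. Qed.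

Lemma monic_transverse_Nker (F : {set {set I}}) (S : {set I}) q : S \in F ->
  monic q -> transverse F (supp_rel y F q) -> Nker y S q.
Proof.
move=> FS mq tq; case: (monic_span_or_Nker S mq) => // Sq.
by case: (tq S FS) => i; apply.
Qed.

Lemma monic_Nker_transverse (F : {set {set I}}) q : retractive_family y F -> q <> one ->
  (forall S, S \in F -> Nker y S q) -> transverse F (supp_rel y F q).
Proof.
move=> hF q1 Nq S FS suppS.
have notin_span S' : S' \in F -> ~ span y S' q.
  by move=> FS' S'q; apply: q1; apply: retractive_span_Nker S'q (Nq S' FS');
     apply: retractive_family_mem FS'.
apply: q1; apply: retractive_span_Nker (Nq S FS); first exact: retractive_family_mem FS.
apply: gen_sub (span_all q) => _ [i _ ->]; apply: span_gen.
by apply: suppS => S' FS' /(notin_span S' FS').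
Qed.

End Kernels.

Theorem mainTheorem6 (G : group) (I : finType) (y : I -> G)
  (y_inj : injective y)
  (y_gen : forall g : G, gen (fun h => exists i, h = y i) g)
  (F : {set {set I}}) (hF : retractive_family y F) :
  forall g : G,
    rho_family_ker y F g <->
    gen (fun q => monic_commutator y q /\ transverse F (supp_rel y F q)) g.
Proof.
move=> g; split=> [kerg | gen_g S FS].
- have : gen (monic_in_kernels y (enum F)) g.
    apply: Nker_gen_monic_in_kernels => // S; rewrite mem_enum => FS.
      exact: retractive_family_mem FS.
    by apply/rho_eq1/kerg.
  apply: gen_sub => q [mq Nq].
  case: (classic (q = gone G)) => [-> | q1]; first exact: gen_one.
  apply: gen_in; split=> //; apply: monic_Nker_transverse => // S FS.
  by apply: Nq; rewrite mem_enum.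
- apply/rho_eq1; apply: gen_sub gen_g => q [mq tq].
  exact: monic_transverse_Nker FS mq tq.
Qed.
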